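(* Let $m\geq 0$ and $k\geq 1$ be integers and let $n$ be a nonnegative integer with $t(m,k)\leq n\leq t(m+1,k)-1$, where \[ t(s,k)= s\left(\left\lfloor \frac{s}{k}\right\rfloor +1\right)k-\binom{\lfloor s/k\rfloor +1}{2}k^2 . \] Then $b(n,k)=m$.
   Context: For a cell $u$ of the Young diagram of a partition $\lambda$, the hook length of $u$ is the number of cells $v$ of the diagram with $v=u$, or $v$ below $u$ in the same column, or $v$ to the right of $u$ in the same row. $\alpha_k(\lambda)$ is the number of cells of the Young diagram of $\lambda$ with hook length exactly $k$. $P(n)$ is the set of partitions of $n$ (with $P(0)$ containing only the empty partition), and $b(n,k)=\max\{\alpha_k(\lambda)\colon\lambda\in P(n)\}$. *)

From mathcomp Require Import all_boot.
Set Implicit Arguments. Unset Strict Implicit. Unset Printing Implicit Defensive.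

Definition is_partition (l : seq nat) : bool :=
  sorted geq l && all (fun r => 0 < r) l.

Definition partition_of (n : nat) (l : seq nat) : bool :=
  is_partition l && (sumn l == n).

(* Cells are (i, j) with i < size l (row) and j < nth 0 l i (column),
   0-indexed.  Hook length = (cells to the right) + (cells below) + 1. *)
Definition hook (l : seq nat) (i j : nat) : nat :=
  (nth 0 l i - j) + count (fun r => j < r) (drop i.+1 l).

Definition alpha (k : nat) (l : seq nat) : nat :=
  sumn [seq count (fun j => hook l i j == k) (iota 0 (nth 0 l i))
       | i <- iota 0 (size l)].

(* Every partition of n has at most n parts, each at most n, so it is
   encoded (after padding with zeros) by some f : 'I_n -> 'I_n.+1. *)
Definition seq_of_ffun (n : nat) (f : {ffun 'I_n -> 'I_n.+1}) : seq nat :=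
  [seq r <- [seq nat_of_ord (f i) | i <- enum 'I_n] | 0 < r].

Definition b (n k : nat) : nat :=
  \max_(f : {ffun 'I_n -> 'I_n.+1} | partition_of n (seq_of_ffun f))
     alpha k (seq_of_ffun f).

(* t(s,k) = s (floor(s/k)+1) k - binom(floor(s/k)+1, 2) k^2 (always >= 0). *)
Definition t (s k : nat) : nat :=
  s * (s %/ k + 1) * k - 'C(s %/ k + 1, 2) * k ^ 2.

From mathcomp Require Import all_boot zify ring.
Set Implicit Arguments. Unset Strict Implicit. Unset Printing Implicit Defensive.

(* A partition is encoded by its beta-numbers, a set [B] of distinct naturals whose sum is
   [n + 'C(size B, 2)]; its cells of hook length [k] correspond to the beads [y] of [B] with
   [y - k \notin B].  Sorting [B] into [k] runners by residue mod [k] turns these into one-step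
   moves on each runner.  A runner with [c] beads and [a] moves has sum at least
   ['C(c, 2) + 'C(a.+1, 2)]; summing over the runners and using the convexity of
   [x |-> 'C(x.+1, 2)] gives [t (alpha k l) k <= n], and [t] is strictly increasing in its first
   argument.  Conversely, for [t m k <= n] an explicit abacus with [m.+1] beads, all but one of
   them movable, has exactly the sum required for a partition of [n]. *)

Lemma geq_trans : transitive geq.
Proof. exact: rev_trans leq_trans. Qed.

Lemma gtn_trans : transitive gtn.
Proof. exact: rev_trans ltn_trans. Qed.

Lemma sorted_geq_cons x s : sorted geq (x :: s) = all (geq x) s && sorted geq s.
Proof. exact: (path_sortedE geq_trans). Qed.

Lemma sorted_gtn_cons x s : sorted gtn (x :: s) = all (gtn x) s && sorted gtn s.
Proof. exact: (path_sortedE gtn_trans). Qed.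

(* The first-column hook lengths of [l], its beta-numbers. *)
Fixpoint beta (l : seq nat) : seq nat :=
  if l is x :: l' then (x + size l') :: beta l' else [::].

Definition count_gt (j : nat) (s : seq nat) : nat := count (fun y => j < y) s.

Lemma size_beta l : size (beta l) = size l.
Proof. by elim: l => //= x l ->. Qed.

Lemma nth_beta l i : i < size l -> nth 0 (beta l) i = nth 0 l i + (size l - i.+1).
Proof. by elim: l i => //= x l IH [|i] hi /=; rewrite ?subSS ?subn0 ?IH. Qed.

Lemma sumn_beta l : sumn (beta l) = sumn l + 'C(size l, 2).
Proof. by elim: l => //= x l ->; rewrite binS bin1; lia. Qed.

Lemma all_beta_lt x l : all (geq x) l -> all (gtn (x + size l)) (beta l).
Proof.
elim: l => //= y l IH /andP [hy /IH /allP hl]; apply/andP; split; first by lia.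
by apply/allP => z /hl /=; lia.
Qed.

Lemma beta_uniq l : sorted geq l -> uniq (beta l).
Proof.
elim: l => // x l IH; rewrite sorted_geq_cons => /andP [hx hl] /=.
rewrite IH // andbT.
by apply/negP => /(allP (all_beta_lt hx)) /=; lia.
Qed.

Lemma nth_gt_count j s : sorted geq s -> forall i, (j < nth 0 s i) = (i < count_gt j s).
Proof.
rewrite /count_gt; elim: s => [|x s IH] hs i /=; first by rewrite nth_nil.
move: hs; rewrite sorted_geq_cons => /andP [hx hs]; case: (ltnP j x) => hjx.
  by case: i => [|i] //=; rewrite IH // add1n ltnS.
have -> : count (fun y => j < y) s = 0.
  by apply/eqP; rewrite -leqn0 leqNgt -has_count; apply/hasP => -[y /(allP hx) /=]; lia.
case: i => [|i] /=; first by lia.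
case: (ltnP i (size s)) => hi; last by rewrite nth_default.
by have /= := allP hx _ (mem_nth 0 hi); lia.
Qed.

(* Column [j] of the row [x] on top of [s] has hook length [x + size s - gap j]; the gaps
   [gap j] are exactly the non-beta-numbers of [s] below [x + size s]. *)
Lemma gaps_beta x s : sorted geq (x :: s) ->
  perm_eq [seq j + size s - count_gt j s | j <- iota 0 x]
          [seq y <- iota 0 (x + size s) | y \notin beta s].
Proof.
rewrite sorted_geq_cons => /andP [hx hs]; set gap := fun j => j + size s - count_gt j s.
have hcount j : count_gt j s <= size s by exact: count_size.
have gap_inj : injective gap.
  move=> j j' /=; wlog hjj' : j j' / j <= j' => [wl|].
    by case: (leqP j j') => [|/ltnW] h e; [exact: wl | apply/esym/wl].
  have : count_gt j' s <= count_gt j s by apply: sub_count => y /=; lia.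
  by have := hcount j; have := hcount j'; rewrite /gap; lia.
have gap_notin j : gap j \notin beta s.
  apply/negP => /(nthP 0) [i]; rewrite size_beta => hi.
  rewrite nth_beta // /gap => e; have := nth_gt_count j hs i.
  by have := hcount j; case: (ltnP i (count_gt j s)) => ? h; lia.
have size_gaps : size [seq y <- iota 0 (x + size s) | y \notin beta s] = x.
  have := count_predC (mem (beta s)) (iota 0 (x + size s)).
  rewrite size_iota -size_filter.
  have -> : size [seq y <- iota 0 (x + size s) | y \in beta s] = size s.
    rewrite -[RHS](size_beta s); apply/perm_size/uniq_perm; rewrite ?filter_uniq ?iota_uniq ?beta_uniq //.
    move=> y; rewrite mem_filter mem_iota /=; case hy: (y \in beta s) => //=.
    by have /= := allP (all_beta_lt hx) y hy; lia.
  by rewrite size_filter (@eq_count _ _ (predC (mem (beta s)))) //; lia.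
have gap_uniq : uniq [seq gap j | j <- iota 0 x] by rewrite map_inj_uniq ?iota_uniq.
have gap_sub : {subset [seq gap j | j <- iota 0 x] <=
                        [seq y <- iota 0 (x + size s) | y \notin beta s]}.
  move=> y /mapP [j]; rewrite mem_iota => /andP [_ hj] ->.
  by rewrite mem_filter gap_notin mem_iota /gap; have := hcount j; lia.
have gap_size : size [seq y <- iota 0 (x + size s) | y \notin beta s]
                <= size [seq gap j | j <- iota 0 x] by rewrite size_gaps size_map size_iota.
have [_ gap_eq] := uniq_min_size gap_uniq gap_sub gap_size.
by apply: uniq_perm; rewrite ?filter_uniq ?iota_uniq.
Qed.

Lemma count_row_hooks k x s : 0 < k -> sorted geq (x :: s) ->
  count (fun j => (x - j) + count_gt j s == k) (iota 0 x)
  = (k <= x + size s) && (x + size s - k \notin beta s).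
Proof.
move=> hk hs; have gaps := gaps_beta hs; set B := x + size s.
have hcount j : count_gt j s <= size s by exact: count_size.
case: (leqP k B) => hkB /=; last first.
  apply/eqP; rewrite -leqn0 leqNgt -has_count.
  by apply/hasP => -[j]; rewrite mem_iota => /andP [_ hj] /eqP; have := hcount j; lia.
rewrite (@eq_in_count _ _ (fun j => j + size s - count_gt j s == B - k)); last first.
  by move=> j; rewrite mem_iota => /andP [_ hj] /=; have hc := hcount j; apply/eqP/eqP; lia.
rewrite -(count_map _ (pred1 (B - k))) count_uniq_mem ?(perm_uniq gaps) ?filter_uniq ?iota_uniq //.
by rewrite (perm_mem gaps) mem_filter mem_iota /= [_ < _](_ : _ = true) ?andbT //; lia.
Qed.

Definition moves (k : nat) (B : seq nat) : nat :=
  count (fun y => (k <= y) && (y - k \notin B)) B.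

Lemma alpha_cons k x s :
  alpha k (x :: s) = count (fun j => (x - j) + count_gt j s == k) (iota 0 x) + alpha k s.
Proof.
rewrite /alpha /= -add1n iotaDl -map_comp /=; congr (_ + _).
by apply: eq_count => j; rewrite /hook /= drop0.
Qed.

Lemma alpha_beta k l : 0 < k -> sorted geq l -> alpha k l = moves k (beta l).
Proof.
move=> hk; elim: l => [|x s IH] //; rewrite sorted_geq_cons => /andP [hx hs].
have /allP hlt := all_beta_lt hx.
rewrite alpha_cons count_row_hooks ?sorted_geq_cons ?hx // IH // /moves /= in_cons.
congr (_ + _).
  by case: (leqP k (x + size s)) => //= h; rewrite ltn_eqF //; lia.
apply: eq_in_count => y /hlt /= hy; rewrite in_cons ltn_eqF //; lia.
Qed.

Lemma moves1_cons x s : all (gtn x) s ->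
  moves 1 (x :: s) = ((0 < x) && (x.-1 \notin s)) + moves 1 s.
Proof.
move=> /allP hs; rewrite /moves /= in_cons subn1.
congr (_ + _); first by case: x {hs} => //= x; rewrite ltn_eqF.
apply: eq_in_count => y /hs /= hy; rewrite in_cons ltn_eqF //; lia.
Qed.

Lemma size_moves1_le x s : sorted gtn (x :: s) -> size (x :: s) + moves 1 (x :: s) <= x.+1.
Proof.
elim: s x => [|y s IH] x.
  by move=> _; rewrite /moves /= in_cons subn1 orbF; case: x => //= x; rewrite ltn_eqF.
rewrite sorted_gtn_cons => /andP [hx hs]; have /= /andP [hyx _] := hx.
rewrite moves1_cons //=; have := IH y hs; rewrite moves1_cons /=; last first.
  by move: hs; rewrite sorted_gtn_cons => /andP [].
rewrite in_cons; case: (eqVneq x.-1 y) => [<-|hne] /=; first by rewrite andbF; lia.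
by case: (x.-1 \in s); rewrite ?andbF ?andbT /=; lia.
Qed.

Lemma bin2_moves1_le_sumn_sorted s :
  sorted gtn s -> 'C(size s, 2) + 'C((moves 1 s).+1, 2) <= sumn s.
Proof.
elim: s => [|x s IH] hs //; have hx := size_moves1_le hs.
move: hs; rewrite sorted_gtn_cons => /andP [hxs /IH].
move: hx; rewrite moves1_cons //= !binS !bin1.
by case: (_ && _) => /=; rewrite ?add0n ?add1n ?binS ?bin1; lia.
Qed.

Lemma perm_moves k s1 s2 : perm_eq s1 s2 -> moves k s1 = moves k s2.
Proof.
by move=> hp; rewrite /moves (permP hp); apply: eq_count => y /=; rewrite (perm_mem hp).
Qed.

Lemma bin2_moves1_le_sumn s :
  uniq s -> 'C(size s, 2) + 'C((moves 1 s).+1, 2) <= sumn s.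
Proof.
move=> us; have hp : perm_eq (sort geq s) s by rewrite perm_sort.
have hs : sorted gtn (sort geq s).
  by rewrite gtn_sorted_uniq_geq sort_uniq us sort_sorted // => a b; apply: leq_total.
by rewrite -(perm_size hp) -(perm_moves _ hp) -(perm_sumn hp) bin2_moves1_le_sumn_sorted.
Qed.

Lemma bin2_size_le_sumn s : uniq s -> 'C(size s, 2) <= sumn s.
Proof. by move=> /bin2_moves1_le_sumn; apply: leq_trans; apply: leq_addr. Qed.

Definition runner (k : nat) (B : seq nat) (r : nat) : seq nat :=
  [seq y %/ k | y <- B & y %% k == r].

Lemma div_mod_addMn k r a : r < k -> (r + k * a) %/ k = a /\ (r + k * a) %% k = r.
Proof.
move=> hr; have hk : 0 < k by lia.
by rewrite addnC mulnC divnMDl // modnMDl divn_small // modn_small // addn0.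
Qed.

Lemma mem_runner k B r z : r < k -> (z \in runner k B r) = (r + k * z \in B).
Proof.
move=> hr; have [hd hm] := div_mod_addMn z hr.
apply/mapP/idP => [[y]|hin]; last by exists (r + k * z); rewrite // mem_filter hm eqxx.
by rewrite mem_filter => /andP [/eqP <- hy] ->; rewrite addnC mulnC -divn_eq.
Qed.

Lemma runner_uniq k B r : uniq B -> uniq (runner k B r).
Proof.
move=> uB; rewrite map_inj_in_uniq ?filter_uniq // => y w.
rewrite !mem_filter => /andP [/eqP hy _] /andP [/eqP hw _] e.
by rewrite (divn_eq y k) (divn_eq w k) e hy hw.
Qed.

Lemma sum_by_residue k (F : nat -> nat) B : 0 < k ->
  \sum_(y <- B) F y = \sum_(r < k) \sum_(y <- B | y %% k == r) F y.
Proof.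
move=> hk; under [RHS]eq_bigr do rewrite big_mkcond.
rewrite exchange_big /=; apply: eq_bigr => y _.
rewrite (bigD1 (Ordinal (ltn_pmod y hk))) //= eqxx big1 ?addn0 // => i hi.
by case: eqP => // h; case/eqP: hi; apply: val_inj; rewrite /= h.
Qed.

Lemma size_runners k B : 0 < k -> size B = \sum_(r < k) size (runner k B r).
Proof.
move=> hk; rewrite -sum1_size (sum_by_residue _ _ hk); apply: eq_bigr => r _.
by rewrite size_map size_filter sum1_count.
Qed.

Lemma sumn_runners k B : 0 < k ->
  sumn B = \sum_(r < k) (r * size (runner k B r) + k * sumn (runner k B r)).
Proof.
move=> hk; rewrite sumnE (sum_by_residue _ _ hk); apply: eq_bigr => r _.
rewrite size_map size_filter sumnE big_map big_filter -sum1_count big_distrr /=.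
rewrite big_distrr -big_split /=.
by apply: eq_bigr => y /eqP hy; rewrite muln1 {1}(divn_eq y k) hy mulnC addnC.
Qed.

Lemma moves_runners k B : 0 < k -> moves k B = \sum_(r < k) moves 1 (runner k B r).
Proof.
move=> hk; rewrite /moves -sumn_count sumnE big_map (sum_by_residue _ _ hk).
apply: eq_bigr => r _; rewrite -sumn_count sumnE !big_map big_filter.
apply: eq_bigr => y /eqP hy /=.
have hr : r < k by rewrite -hy ltn_pmod.
have hyE : y = r + k * (y %/ k) by rewrite {1}(divn_eq y k) hy mulnC addnC.
rewrite mem_runner // divn_gt0 //; case: (leqP k y) => //= hky.
suff -> : r + k * (y %/ k - 1) = y - k by [].
have : 0 < y %/ k by rewrite divn_gt0.
by rewrite mulnBr muln1; move: hyE; nia.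
Qed.

Definition abacus (k N : nat) (L : nat -> seq nat) : seq nat :=
  [seq y <- iota 0 N | y %/ k \in L (y %% k)].

Lemma abacus_uniq k N L : uniq (abacus k N L).
Proof. exact: filter_uniq (iota_uniq 0 N). Qed.

Lemma perm_runner_abacus k N L r : r < k -> uniq (L r) ->
  (forall z, z \in L r -> r + k * z < N) -> perm_eq (runner k (abacus k N L) r) (L r).
Proof.
move=> hr uL hN; apply: uniq_perm; rewrite ?runner_uniq ?abacus_uniq //.
move=> z; rewrite mem_runner // mem_filter mem_iota /=.
have [-> ->] := div_mod_addMn z hr.
by case hz: (z \in L r); rewrite ?andbF //= hN.
Qed.

Lemma sumn_iota n : sumn (iota 0 n) = 'C(n, 2).
Proof. by rewrite -bin2_sum sumnE /index_iota subn0. Qed.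

Lemma double_bin2 n : 2 * 'C(n, 2) + n = n * n.
Proof. by elim: n => // n IH; rewrite binS bin1; nia. Qed.

(* Compare with the abacus whose runner [r] holds [c r] beads at the bottom positions. *)
Lemma bin2_sum_le_runners k (c : 'I_k -> nat) : 0 < k ->
  'C(\sum_(r < k) c r, 2) <= \sum_(r < k) (r * c r + k * 'C(c r, 2)).
Proof.
move=> hk; set S := \sum_(r < k) c r.
pose L r := if insub r is Some i then iota 0 (c i) else [::].
pose B := abacus k (k * S.+1) L.
have hp (i : 'I_k) : perm_eq (runner k B i) (iota 0 (c i)).
  have Li : L i = iota 0 (c i) by rewrite /L valK.
  rewrite -Li; apply: perm_runner_abacus; rewrite ?Li ?iota_uniq // => z.
  rewrite mem_iota add0n => hz.
  have : c i <= S by rewrite /S (bigD1 i) //= leq_addr.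
  by have := ltn_ord i; nia.
have := bin2_size_le_sumn (abacus_uniq k (k * S.+1) L).
rewrite -/B (size_runners _ hk) (sumn_runners _ hk).
have -> : S = \sum_(r < k) size (runner k B r).
  by apply: eq_bigr => i _; rewrite (perm_size (hp i)) size_iota.
move=> h; apply: (leq_trans h); apply/eq_leq/eq_bigr => i _.
by rewrite (perm_size (hp i)) (perm_sumn (hp i)) size_iota sumn_iota.
Qed.

Lemma tE s k : t s k = k * (k * 'C((s %/ k).+1, 2) + s %% k * (s %/ k).+1).
Proof.
rewrite /t addn1; set q := s %/ k; set r := s %% k.
have hs : s = q * k + r by exact: divn_eq.
have hC := double_bin2 q.+1.
suff -> : s * q.+1 * k = 'C(q.+1, 2) * k ^ 2 + k * (k * 'C(q.+1, 2) + r * q.+1) by rewrite addKn.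
by rewrite hs; nia.
Qed.

Lemma tS s k : 0 < k -> t s.+1 k = t s k + k * (s %/ k).+1.
Proof.
move=> hk; rewrite !tE; set q := s %/ k; set r := s %% k.
have hs : s.+1 = r.+1 + k * q by rewrite /r /q {1}(divn_eq s k) addnC mulnC.
case: (ltnP r.+1 k) => h; first by rewrite hs; have [-> ->] := div_mod_addMn q h; nia.
have -> : s.+1 = 0 + k * q.+1 by lia.
by have [-> ->] := div_mod_addMn q.+1 hk; rewrite binS bin1; nia.
Qed.

Lemma t_ltn k : 0 < k -> {homo t^~ k : a b / a < b}.
Proof.
move=> hk; apply: homo_ltn; first exact: ltn_trans.
by move=> s; rewrite tS // -addn1 leq_add2l muln_gt0 hk.
Qed.

(* The chord of the convex map [x |-> 'C(x.+1, 2)] between [q] and [q.+1] lies below it on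
   all of [nat]. *)
Lemma bin2_chord q x : 2 * q.+1 * x <= 2 * 'C(x.+1, 2) + q * q.+1.
Proof.
have := double_bin2 x.+1; case: (leqP x q) => h.
  have [d ->] : exists d, q = x + d by exists (q - x); lia.
  by nia.
have [d ->] : exists d, x = q.+1 + d by exists (x - q.+1); lia.
by nia.
Qed.

Lemma t_sum_le k (a : 'I_k -> nat) : 0 < k ->
  t (\sum_(r < k) a r) k <= k * \sum_(r < k) 'C((a r).+1, 2).
Proof.
move=> hk; rewrite tE leq_pmul2l //; set m := \sum_(r < k) a r.
set q := m %/ k; set r := m %% k; have hm : m = q * k + r by exact: divn_eq.
have hsum : 2 * q.+1 * m <= 2 * \sum_(r < k) 'C((a r).+1, 2) + k * (q * q.+1).
  have -> : k * (q * q.+1) = \sum_(r < k) q * q.+1 by rewrite sum_nat_const card_ord.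
  rewrite /m !big_distrr -big_split /=.
  by apply: leq_sum => i _; apply: bin2_chord.
by have := double_bin2 q.+1; move: hsum; rewrite hm; nia.
Qed.

Lemma t_moves_le k B : 0 < k -> uniq B -> t (moves k B) k + 'C(size B, 2) <= sumn B.
Proof.
move=> hk uB; rewrite (moves_runners _ hk) (size_runners _ hk) (sumn_runners _ hk) addnC.
apply: leq_trans (leq_add (bin2_sum_le_runners _ hk) (t_sum_le _ hk)) _.
rewrite big_distrr -big_split /=; apply: leq_sum => i _.
rewrite -addnA -mulnDr leq_add2l leq_pmul2l //.
exact: bin2_moves1_le_sumn (runner_uniq _ _ uB).
Qed.

Lemma t_alpha_le_sumn k l : 0 < k -> sorted geq l -> t (alpha k l) k <= sumn l.
Proof.
move=> hk hs; have := t_moves_le hk (beta_uniq hs).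
by rewrite -alpha_beta // sumn_beta size_beta leq_add2r.
Qed.

Lemma moves1_sparse s : {in s, forall z, z.+1 \notin s} -> moves 1 s = count (leq 1) s.
Proof.
move=> hs; apply: eq_in_count => y hy /=; case: y hy => //= y hy.
by rewrite subn1 /=; case: (boolP (y \in s)) => // /hs; rewrite hy.
Qed.

Lemma sumn_map_double_iota c : sumn [seq 2 * x | x <- iota 0 c] = 2 * 'C(c, 2).
Proof. by rewrite sumnE big_map -big_distrr -sumnE sumn_iota. Qed.

Lemma sumn_map_odd_iota c : sumn [seq (2 * x).+1 | x <- iota 0 c] = c * c.
Proof.
elim: c => // c IH; rewrite -[c.+1]addn1 iotaD map_cat sumn_cat IH /= addn0 add0n; lia.
Qed.

Lemma sum_ord_ltn k r (f : nat -> nat) : r <= k ->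
  \sum_(i < k) (i < r) * f i = \sum_(i < r) f i.
Proof.
move=> hrk; rewrite (eq_bigr (fun i : 'I_k => if i < r then f i else 0)).
  by rewrite -big_mkcond (big_ord_narrow hrk).
by move=> i _; case: (i < r); rewrite ?mul1n ?mul0n.
Qed.

Lemma sum_ord_eqn k e (f : nat -> nat) : e < k -> \sum_(i < k) ((i : nat) == e) * f i = f e.
Proof.
move=> he; rewrite (bigD1 (Ordinal he)) //= eqxx mul1n big1 ?addn0 // => i hi.
by case: eqP => // h; case/eqP: hi; apply: val_inj.
Qed.

Section Witness.
Variables (k q r e j : nat).
Hypotheses (hk : 0 < k) (hr : r < k) (he : e < k).

Definition wit_count (i : nat) : nat := q + (i < r).

(* Runner [i] carries [wit_count i] beads, each just above an empty position, except that runner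
   [e] has them on the even positions (so a bead at [0] cannot move) plus an extra movable bead at
   [2 * wit_count e + j]; the parameters [j] and [e] tune the total sum in steps of [k] and [1]. *)
Definition wit_runner (i : nat) : seq nat :=
  if i == e then rcons [seq 2 * x | x <- iota 0 (wit_count i)] (2 * wit_count i + j)
  else [seq (2 * x).+1 | x <- iota 0 (wit_count i)].

Definition witness : seq nat := abacus k (k * (2 * q + j + 3)) wit_runner.

Lemma wit_runner_uniq i : uniq (wit_runner i).
Proof.
rewrite /wit_runner; case: (i == e); rewrite ?rcons_uniq map_inj_uniq ?iota_uniq ?andbT //;
  try by move=> x y /eqP; lia.
by apply/mapP => -[x]; rewrite mem_iota => /andP [_ hx]; lia.
Qed.

Lemma wit_runner_le i z : z \in wit_runner i -> z <= 2 * q + 2 + j.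
Proof.
rewrite /wit_runner /wit_count; case: (i == e); rewrite ?mem_rcons ?in_cons.
  case/orP => [/eqP ->|/mapP [x]]; first by case: (i < r) => /=; lia.
  by rewrite mem_iota => /andP [_ hx] ->; case: (i < r) hx => /=; lia.
by case/mapP => x; rewrite mem_iota => /andP [_ hx] ->; case: (i < r) hx => /=; lia.
Qed.

Lemma size_wit_runner i : size (wit_runner i) = wit_count i + (i == e).
Proof. by rewrite /wit_runner; case: (i == e); rewrite ?size_rcons size_map size_iota ?addn1 ?addn0. Qed.

Lemma sumn_wit_runner i :
  sumn (wit_runner i) = wit_count i * wit_count i + (i == e) * (wit_count i + j).
Proof.
rewrite /wit_runner; case: (i == e); last by rewrite sumn_map_odd_iota addn0.
rewrite -cats1 sumn_cat sumn_map_double_iota /= mul1n.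
by have := double_bin2 (wit_count i); lia.
Qed.

Lemma wit_count_le_moves1 i : wit_count i <= moves 1 (wit_runner i).
Proof.
rewrite moves1_sparse; last first.
  move=> z; rewrite /wit_runner; case: (i == e) => /=; last first.
    by case/mapP => x _ ->; apply/mapP => -[y _]; lia.
  rewrite !mem_rcons !in_cons => /orP [/eqP ->|/mapP [x]].
    by apply/negP => /orP [/eqP|/mapP [y]]; rewrite ?mem_iota; lia.
  rewrite mem_iota => /andP [_ hx] ->.
  by apply/negP => /orP [/eqP|/mapP [y]]; rewrite ?mem_iota; lia.
rewrite /wit_runner; case: (i == e); last first.
  by rewrite count_map (@eq_count _ _ predT) ?count_predT ?size_iota.
case: (wit_count i) => // c; rewrite -cats1 count_cat /=.
rewrite count_map (@eq_in_count _ _ predT) ?count_predT ?size_iota; first by lia.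
by move=> x; rewrite mem_iota /=; lia.
Qed.

Lemma perm_runner_witness (i : 'I_k) : perm_eq (runner k witness i) (wit_runner i).
Proof.
apply: perm_runner_abacus; rewrite ?wit_runner_uniq // => z /wit_runner_le hz.
have : k * z <= k * (2 * q + 2 + j) by rewrite leq_pmul2l.
by have := ltn_ord i; lia.
Qed.

Lemma size_witness : size witness = (q * k + r).+1.
Proof.
rewrite (size_runners _ hk).
under eq_bigr => i _ do rewrite (perm_size (perm_runner_witness i)) size_wit_runner /wit_count
  -[nat_of_bool (i < r)]muln1 -[nat_of_bool (_ == e)]muln1.
rewrite !big_split /= sum_nat_const card_ord (sum_ord_ltn (fun=> 1) (ltnW hr)) (sum_ord_eqn (fun=> 1) he).
by rewrite sum_nat_const card_ord; lia.
Qed.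

Lemma moves_witness : q * k + r <= moves k witness.
Proof.
rewrite (moves_runners _ hk); apply: (@leq_trans (\sum_(i < k) wit_count i)).
  under eq_bigr => i _ do rewrite /wit_count -[nat_of_bool (i < r)]muln1.
  rewrite big_split /= sum_nat_const card_ord (sum_ord_ltn (fun=> 1) (ltnW hr)).
  by rewrite sum_nat_const card_ord; lia.
apply: leq_sum => i _; rewrite (perm_moves _ (perm_runner_witness i)).
exact: wit_count_le_moves1.
Qed.

Lemma sumn_witness :
  sumn witness + r = t (q * k + r) k + e + k * (e < r) + k * j + 'C((q * k + r).+1, 2).
Proof.
rewrite (sumn_runners _ hk).
under eq_bigr => i _ do rewrite (perm_size (perm_runner_witness i))
  (perm_sumn (perm_runner_witness i)) size_wit_runner sumn_wit_runner.
rewrite (eq_bigr (fun i : 'I_k => q * i + (i < r) * i + ((i : nat) == e) * i + k * (q * q)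
    + (i < r) * (k * (2 * q + 1)) + ((i : nat) == e) * (k * (wit_count i + j)))); last first.
  by move=> i _; rewrite /wit_count; case: (i < r); case: (_ == e) => /=; nia.
have sum_id n : \sum_(i < n) i = 'C(n, 2) by rewrite -bin2_sum big_mkord.
rewrite !big_split /= -big_distrr /= sum_id (sum_ord_ltn id (ltnW hr)) (sum_ord_eqn id he) sum_id.
rewrite sum_nat_const card_ord (sum_ord_ltn (fun=> k * (2 * q + 1)) (ltnW hr)).
rewrite sum_nat_const card_ord (sum_ord_eqn (fun i => k * (wit_count i + j)) he) tE.
rewrite divnMDl // modnMDl divn_small // modn_small // addn0 /wit_count.
apply/eqP; rewrite -(eqn_pmul2l (isT : 0 < 2)); apply/eqP.
have := double_bin2 k; have := double_bin2 r; have := double_bin2 q.+1.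
have := double_bin2 (q * k + r).+1.
nia.
Qed.

End Witness.

Fixpoint unbeta (b : seq nat) : seq nat :=
  if b is y :: b' then (y - size b') :: unbeta b' else [::].

Lemma size_unbeta b : size (unbeta b) = size b.
Proof. by elim: b => //= y b ->. Qed.

Lemma size_le_sorted_gtn y b : sorted gtn (y :: b) -> size b <= y.
Proof. by elim: b y => //= z b IH y /andP [hzy /IH]; lia. Qed.

Lemma beta_unbeta b : sorted gtn b -> beta (unbeta b) = b.
Proof.
elim: b => // y b IH hs; have hb := size_le_sorted_gtn hs.
by move: hs; rewrite sorted_gtn_cons => /andP [_ /IH] /=; rewrite size_unbeta => ->; rewrite subnK.
Qed.

Lemma unbeta_sorted b : sorted gtn b -> sorted geq (unbeta b).
Proof.
elim: b => // y [|z b] IH hs //; have hzb := size_le_sorted_gtn (path_sorted hs).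
move: hs => /= /andP [hzy hs]; have /= -> := IH hs.
by rewrite andbT; lia.
Qed.

Lemma alpha_filter_pos k l : alpha k [seq x <- l | 0 < x] = alpha k l.
Proof.
elim: l => [|x l IH] //=; case: (posnP x) => [->|hx] /=; first by rewrite alpha_cons /= IH.
rewrite !alpha_cons IH; congr (_ + _); apply: eq_count => j /=.
by rewrite /count_gt count_filter; congr (_ + _ == _); apply: eq_count => y /=; lia.
Qed.

Lemma sumn_filter_pos l : sumn [seq x <- l | 0 < x] = sumn l.
Proof. by elim: l => //= x l IH; case: (posnP x) => [->|hx] //=; rewrite IH. Qed.

Lemma partition_of_beta_set k B : 0 < k -> uniq B ->
  exists l, [/\ is_partition l, sumn l + 'C(size B, 2) = sumn B & alpha k l = moves k B].
Proof.
move=> hk uB; set b := sort geq B; have hb : perm_eq b B by rewrite perm_sort.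
have sb : sorted gtn b.
  by rewrite gtn_sorted_uniq_geq sort_uniq uB sort_sorted // => x y; apply: leq_total.
have sl := unbeta_sorted sb; have bl := beta_unbeta sb.
exists [seq x <- unbeta b | 0 < x]; split.
- rewrite /is_partition sorted_filter ?sl //=; last exact: geq_trans.
  by apply/allP => x; rewrite mem_filter => /andP [].
- by rewrite sumn_filter_pos -(perm_size hb) -(perm_sumn hb) -size_unbeta -sumn_beta bl.
- by rewrite alpha_filter_pos alpha_beta // bl (perm_moves _ hb).
Qed.

Lemma modnD_carry k r d : r < k -> d < k -> (r + d) %% k + k * ((r + d) %% k < r) = r + d.
Proof.
move=> hr hd; case: (ltnP (r + d) k) => h.
  by rewrite modn_small // ltnNge leq_addr muln0 addn0.
have -> : r + d = (r + d - k) + k * 1 by lia.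
by have [_ ->] := @div_mod_addMn k (r + d - k) 1 (ltac:(lia)); rewrite (_ : _ < r = true) //; lia.
Qed.

Lemma exists_partition_alpha_ge k m n : 0 < k -> t m k <= n ->
  exists l, [/\ is_partition l, sumn l = n & m <= alpha k l].
Proof.
move=> hk htn; set q := m %/ k; set r := m %% k.
set d := (n - t m k) %% k; set j := (n - t m k) %/ k; set e := (r + d) %% k.
have hr : r < k by rewrite ltn_pmod.
have hd : d < k by rewrite ltn_pmod.
have hm : m = q * k + r by exact: divn_eq.
have hn : n = t m k + (j * k + d) by rewrite -divn_eq subnKC.
have he : e < k by rewrite ltn_pmod.
have [l [hl hsum ha]] := partition_of_beta_set hk (abacus_uniq k (k * (2 * q + j + 3)) (wit_runner q r e j)).
exists l; split => //; last by rewrite ha hm moves_witness.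
have := modnD_carry hr hd; have := sumn_witness q j hk hr he.
by rewrite -hm -hsum -/(witness _ _ _ _ _) size_witness // -hm hn -/e; lia.
Qed.

Lemma leq_sumn_mem x l : x \in l -> x <= sumn l.
Proof.
elim: l => //= y l IH; rewrite in_cons => /orP [/eqP ->|/IH h]; first exact: leq_addr.
exact: leq_trans h (leq_addl _ _).
Qed.

Lemma size_le_sumn_pos l : all (leq 1) l -> size l <= sumn l.
Proof. by elim: l => //= x l IH /andP [hx /IH]; lia. Qed.

Lemma seq_of_ffun_onto n l : is_partition l -> sumn l = n ->
  exists f : {ffun 'I_n -> 'I_n.+1}, seq_of_ffun f = l.
Proof.
move=> /andP [_ hpos] hsum; exists [ffun i : 'I_n => inord (nth 0 l i)].
have hsize : size l <= n by rewrite -hsum size_le_sumn_pos.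
rewrite /seq_of_ffun.
have -> : [seq nat_of_ord ([ffun i : 'I_n => (inord (nth 0 l i) : 'I_n.+1)] i) | i <- enum 'I_n]
        = [seq nth 0 l x | x <- iota 0 n].
  rewrite -val_enum_ord -map_comp; apply: eq_map => i /=; rewrite ffunE inordK // ltnS.
  case: (ltnP i (size l)) => hi; last by rewrite nth_default.
  by apply: leq_trans (leq_sumn_mem (mem_nth 0 hi)) _; rewrite hsum.
rewrite -(subnKC hsize) iotaD map_cat filter_cat -/(mkseq _ _) mkseq_nth (all_filterP hpos).
rewrite (@eq_in_filter _ _ pred0) ?filter_pred0 ?cats0 // => y /mapP [x].
by rewrite mem_iota add0n => /andP [hx _] ->; rewrite nth_default.
Qed.

Theorem theorem4p1 (m k n : nat) :
  1 <= k -> t m k <= n -> n <= t m.+1 k - 1 -> b n k = m.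
Proof.
move=> hk htn hnt; have t_mono := leqW_mono (leq_mono (t_ltn hk)).
have htm : t m k < t m.+1 k := t_ltn hk (ltnSn m).
apply/eqP; rewrite eqn_leq; apply/andP; split.
  apply/bigmax_leqP => f /andP [/andP [hs _] /eqP hsum].
  rewrite -ltnS -t_mono; apply: leq_ltn_trans (t_alpha_le_sumn hk hs) _.
  by rewrite hsum; lia.
have [l [hl hsum ha]] := exists_partition_alpha_ge hk htn.
have [f hf] := seq_of_ffun_onto hl hsum; apply: leq_trans ha _; rewrite -hf.
apply: (leq_bigmax_cond (P := fun f => partition_of n (seq_of_ffun f))).
by rewrite /partition_of hf hl hsum eqxx.
Qed.
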